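(* Let $G=A_\infty$ be the finitary alternating group on a countably infinite set (the group of even permutations moving only finitely many points). Then every element of $G$ is a commutator $xyx^{-1}y^{-1}$ with $x,y\in G$, but for every conjugacy class $C$ of $G$ one has $C^2=\{c_1c_2: c_1,c_2\in C\}\ne G$. *)

(* The countably infinite set is nat; A_oo is realised as a
   predicate on functions nat -> nat. *)
From mathcomp Require Import all_boot all_fingroup.
Set Implicit Arguments. Unset Strict Implicit. Unset Printing Implicit Defensive.

Definition finperm_of (n : nat) (s : 'S_n) (i : nat) : nat :=
  match insub i : option 'I_n with
  | Some j => val (s j)
  | None => i
  end.

Definition Ainf (f : nat -> nat) : Prop :=
  exists (n : nat) (s : 'S_n), ~~ odd_perm s /\ f =1 finperm_of s.

Definition inv_fun (f g : nat -> nat) : Prop := cancel f g /\ cancel g f.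

Definition is_commutator (c : nat -> nat) : Prop :=
  exists x y xi yi, [/\ Ainf x, Ainf y, inv_fun x xi, inv_fun y yi &
                        c =1 x \o y \o xi \o yi].

Definition conjugate_in_Ainf (g h : nat -> nat) : Prop :=
  exists z zi, [/\ Ainf z, inv_fun z zi & h =1 z \o g \o zi].

From mathcomp Require Import all_boot all_fingroup.
From mathcomp Require Import zify.
Set Implicit Arguments. Unset Strict Implicit. Unset Printing Implicit Defensive.

(* A_oo is modelled on nat: its elements are the maps finperm_of s induced by
   even permutations s of {0,..,n-1}.  Both halves of the theorem are thus
   reduced to statements about permutations of finite sets.

   Every permutation g of a finite set is a product g = s * u
   of two involutions: on each cycle of length L, numbered by Z/LZ, take the
   reflections i |-> b - i and i |-> b + 1 - i.  Choosing b cycle by cycle keeps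
   the numbers of points moved by s and u within 2 of each other; when g is
   even, the sign of an involution moving 2k points, (-1)^k, then forces these
   numbers to be equal, so s and u are conjugate, u = s ^ p, and
   g = s * s ^ p = [~ s, p].  Four extra fixed points make s and p even.

   A conjugate of g moves as many points as g,
   so the product of two conjugates of g moves at most twice as many, while
   the square of a long enough cycle moves all the points of that cycle. *)

(* Transport between permutations of {0,..,n-1} and permutations of nat. *)
Section FinpermOf.
Variable n : nat.
Implicit Types s t : 'S_n.

Lemma finperm_of_lt s i (lt_in : i < n) :
  finperm_of s i = val (s (Ordinal lt_in)).
Proof. by rewrite /finperm_of insubT. Qed.

Lemma finperm_of_ge s i : n <= i -> finperm_of s i = i.
Proof. by move=> le_ni; rewrite /finperm_of insubN // -leqNgt. Qed.

Lemma finperm_of_ord s (j : 'I_n) : finperm_of s j = val (s j).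
Proof. by rewrite (finperm_of_lt s (ltn_ord j)); congr (val (s _)); apply: val_inj. Qed.

(* finperm_of is a group morphism into (nat -> nat, \o), up to the order of
   composition: MathComp multiplies permutations left to right. *)
Lemma finperm_ofM s t : finperm_of (s * t) =1 finperm_of t \o finperm_of s.
Proof.
move=> i /=; case: (ltnP i n) => [lt_in | le_ni]; last by rewrite !finperm_of_ge.
by rewrite (finperm_of_lt _ lt_in) permM (finperm_of_lt s lt_in) finperm_of_ord.
Qed.

Lemma finperm_of1 : finperm_of (1 : 'S_n) =1 id.
Proof.
move=> i; case: (ltnP i n) => [lt_in | le_ni]; last by rewrite finperm_of_ge.
by rewrite (finperm_of_lt _ lt_in) perm1.
Qed.

Lemma finperm_of_inv s : inv_fun (finperm_of s) (finperm_of s^-1).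
Proof.
split=> i; [have := finperm_ofM s s^-1 i | have := finperm_ofM s^-1 s i].
  by rewrite mulgV finperm_of1.
by rewrite mulVg finperm_of1.
Qed.

End FinpermOf.

Lemma finperm_of_lift n (s : 'S_n) :
  finperm_of (lift_perm ord_max ord_max s) =1 finperm_of s.
Proof.
move=> i; case: (ltngtP i n) => [lt_in | lt_ni | ->].
- have lt_iSn : i < n.+1 by lia.
  rewrite (finperm_of_lt _ lt_iSn) (finperm_of_lt _ lt_in).
  have -> : Ordinal lt_iSn = lift ord_max (Ordinal lt_in).
    by apply: val_inj; rewrite /= /bump leqNgt lt_in.
  by rewrite lift_perm_lift /= /bump leqNgt ltn_ord.
- by rewrite !finperm_of_ge //; lia.
- rewrite (finperm_of_lt _ (ltnSn n)) finperm_of_ge //.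
  have -> : Ordinal (ltnSn n) = ord_max by apply: val_inj.
  by rewrite lift_perm_id.
Qed.

Lemma widen_perm n m : n <= m -> forall s : 'S_n,
  exists t : 'S_m, odd_perm t = odd_perm s /\ finperm_of t =1 finperm_of s.
Proof.
elim: m => [|m IHm] le_nm s.
  by move: s; rewrite leqn0 in le_nm; rewrite (eqP le_nm) => s; exists s.
case: (ltnP m n) => [lt_mn | le_nm'].
  have eq_n : n = m.+1 by apply/eqP; rewrite eqn_leq le_nm.
  by move: s; rewrite eq_n => s; exists s.
have [t [sign_t t_s]] := IHm le_nm' s.
exists (lift_perm ord_max ord_max t); split.
  by rewrite odd_lift_perm addbb.
by move=> i; rewrite finperm_of_lift t_s.
Qed.

(* Support size, sign and conjugacy of involutions. *)
Section Involutions.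
Variable T : finType.
Implicit Types s u w p : {perm T}.
Local Open Scope group_scope.

Definition nmoved s := #|[set z | s z != z]|.

Lemma nmoved0 s : nmoved s = 0 -> s = 1.
Proof.
move/eqP; rewrite cards_eq0 => /eqP moved0; apply/permP => z; rewrite perm1.
by apply/eqP/negPn/negP => sz; move/setP: moved0 => /(_ z); rewrite !inE sz.
Qed.

Lemma moved_pointP s : nmoved s != 0 -> exists x, s x != x.
Proof. by rewrite cards_eq0 => /set0Pn [x]; rewrite inE; exists x. Qed.

Lemma involution_split s x : involutive s -> s x != x ->
  let s' := tperm x (s x) * s in
  [/\ involutive s', s' x = x, s' (s x) = s x & nmoved s = (nmoved s').+2].
Proof.
move=> sK sx s'.
have s'x : s' x = x by rewrite permM tpermL sK.
have s'sx : s' (s x) = s x by rewrite permM tpermR.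
have s'E z : z != x -> z != s x -> s' z = s z.
  by move=> zx zsx; rewrite permM tpermD // eq_sym.
have moved' : [set z | s' z != z] = [set z | s z != z] :\ x :\ s x.
  apply/setP => z; rewrite !inE.
  have [->|zsx] := eqVneq z (s x); first by rewrite s'sx eqxx.
  have [->|zx] := eqVneq z x; first by rewrite s'x eqxx.
  by rewrite s'E.
split => // [z|].
  have [->|zsx] := eqVneq z (s x); first by rewrite !s'sx.
  have [->|zx] := eqVneq z x; first by rewrite !s'x.
  rewrite s'E // s'E ?sK //.
    by apply: contra zsx => /eqP <-; rewrite sK.
  by apply: contra zx => /eqP /(congr1 s); rewrite !sK => ->.
rewrite /nmoved moved' (cardsD1 (s x) [set z | s z != z]).
rewrite (cardsD1 x ([set z | s z != z] :\ s x)) !inE sK eq_sym sx /=.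
by rewrite setDDl setUC -setDDl.
Qed.

(* An involution moving 2k points is a product of k disjoint transpositions,
   hence has sign (-1)^k. *)
Lemma odd_perm_involution s : involutive s ->
  ~~ odd (nmoved s) /\ odd_perm s = odd (nmoved s)./2.
Proof.
have [k] := ubnP (nmoved s); elim: k s => // k IHk s lt_sk sK.
have [s0|/moved_pointP [x sx]] := eqVneq (nmoved s) 0.
  by rewrite s0 (nmoved0 s0) odd_perm1.
have [s'K _ _ nmoved_s] := involution_split sK sx.
set s' := tperm x (s x) * s in s'K nmoved_s.
have [even_s' odd_s'] : ~~ odd (nmoved s') /\ odd_perm s' = odd (nmoved s')./2.
  by apply: IHk => //; move: lt_sk; rewrite nmoved_s; lia.
have -> : odd_perm s = odd_perm (tperm x (s x) * s') by rewrite /s' mulgA tperm2 mul1g.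
rewrite odd_mul_tperm odd_s' nmoved_s /= even_s' eq_sym sx /=.
by case: (odd _) even_s'.
Qed.

Lemma tperm_commute w a b : w a = a -> w b = b ->
  forall z, w (tperm a b z) = tperm a b (w z).
Proof.
move=> wa wb z; case: (tpermP a b z) => [->|->|za zb]; rewrite ?wa ?wb ?tpermL ?tpermR //.
rewrite tpermD //; apply/eqP => wz.
  by apply: za; apply: (perm_inj (s := w)); rewrite wa wz.
by apply: zb; apply: (perm_inj (s := w)); rewrite wb wz.
Qed.

Lemma tperm_transport (f : T -> T) x x' : injective f ->
  forall z, tperm (f x) (f x') (f z) = f (tperm x x' z).
Proof.
move=> f_inj z; case: (tpermP x x' z) => [->|->|zx zx']; rewrite ?tpermL ?tpermR //.
by rewrite tpermD // (inj_eq f_inj); apply/eqP => /esym.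
Qed.

(* Two involutions moving the same number of points are conjugate: match
   their 2-cycles one at a time. *)
Lemma involution_conj s u : involutive s -> involutive u ->
  nmoved s = nmoved u -> exists p, forall z, u (p z) = p (s z).
Proof.
have [k] := ubnP (nmoved s); elim: k s u => // k IHk s u lt_sk sK uK su.
have [s0|s_ne0] := eqVneq (nmoved s) 0.
  have u0 : nmoved u = 0 by rewrite -su.
  by exists 1 => z; rewrite (nmoved0 s0) (nmoved0 u0) !perm1.
have [x sx] := moved_pointP s_ne0.
have [y uy] : exists y, u y != y by apply: moved_pointP; rewrite -su.
have [s'K s'x s'sx nmoved_s] := involution_split sK sx.
have [u'K u'y u'uy nmoved_u] := involution_split uK uy.
set s' := tperm x (s x) * s in s'K s'x s'sx nmoved_s.
set u' := tperm y (u y) * u in u'K u'y u'uy nmoved_u.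
have [p0 p0E] : exists p0, forall z, u' (p0 z) = p0 (s' z).
  apply: IHk => //; first by move: lt_sk; rewrite nmoved_s; lia.
  by apply/eq_add_S/eq_add_S; rewrite -nmoved_s -nmoved_u.
(* Correct p0 so that it maps the 2-cycle (x, s x) onto (y, u y); the points
   a, b and w below are fixed by u'. *)
set a := p0 x; set b := p0 (s x); set w := tperm a y b.
have u'a : u' a = a by rewrite /a p0E s'x.
have u'b : u' b = b by rewrite /b p0E s'sx.
have ab : a != b by rewrite /a /b (inj_eq perm_inj) eq_sym.
have u'w : u' w = w by rewrite /w tperm_commute // u'b.
have wy : w != y.
  rewrite /w; case: (tpermP a y b) => [ba|by_|_ /eqP //]; last by rewrite -by_.
  by rewrite ba eqxx in ab.
exists (p0 * tperm a y * tperm w (u y)) => z.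
have u'C v : u' (tperm w (u y) (tperm a y v)) = tperm w (u y) (tperm a y (u' v)).
  by rewrite tperm_commute // tperm_commute.
have uE v : u v = u' (tperm y (u y) v) by rewrite /u' permM tpermK.
have sE v : s v = s' (tperm x (s x) v) by rewrite /s' permM tpermK.
rewrite !permM sE -p0E -u'C uE; congr (u' _).
have q_inj : injective (fun v => tperm w (u y) (tperm a y (p0 v))).
  by move=> v1 v2 /perm_inj /perm_inj /perm_inj.
have qx : tperm w (u y) (tperm a y (p0 x)) = y.
  by rewrite -/a tpermL tpermD // eq_sym.
have qsx : tperm w (u y) (tperm a y (p0 (s x))) = u y.
  by rewrite -/b -/w tpermL.
by have := tperm_transport x (s x) q_inj z; rewrite /= qx qsx => ->.
Qed.

Lemma involution_tperm w a b : involutive w -> a != b -> w a = a -> w b = b ->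
  involutive (tperm a b * w) /\ nmoved (tperm a b * w) = (nmoved w).+2.
Proof.
move=> wK ab wa wb; set t := tperm a b.
have tw_K : involutive (t * w).
  by move=> z; rewrite !permM tperm_commute // wK tpermK.
have twa : (t * w) a != a by rewrite permM tpermL wb eq_sym.
have [_ _ _ ->] := involution_split tw_K twa.
suff -> : tperm a ((t * w) a) * (t * w) = w by [].
by apply/permP => z; rewrite !permM tpermL wb -/t tpermK.
Qed.

End Involutions.

Definition refl_index L b i := (b + L - i) %% L.

Lemma refl_indexK L b i : i < L -> refl_index L b (refl_index L b i) = i.
Proof.
move=> lt_iL; rewrite /refl_index.
have := divn_eq (b + L - i) L; set q := _ %/ L; set j := _ %% L => def_j.
have lt_jL : j < L by rewrite ltn_mod; lia.
have -> : b + L - j = q * L + i by lia.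
by rewrite modnMDl modn_small.
Qed.

Lemma refl_indexS L b i : i < L ->
  refl_index L b.+1 (refl_index L b i) = i.+1 %% L.
Proof.
move=> lt_iL; rewrite /refl_index.
have := divn_eq (b + L - i) L; set q := _ %/ L; set j := _ %% L => def_j.
have lt_jL : j < L by rewrite ltn_mod; lia.
have -> : b.+1 + L - j = q * L + i.+1 by lia.
by rewrite modnMDl.
Qed.

Lemma refl_index_fixed L b i : b <= 2 -> 2 <= L -> i < L ->
  (refl_index L b i == i) = [|| b + L == i.*2, b == i.*2 | b == i.*2 + L].
Proof.
move=> le_b2 le_2L lt_iL; rewrite /refl_index.
have := divn_eq (b + L - i) L; set q := _ %/ L; set j := _ %% L => def_j.
have lt_jL : j < L by rewrite ltn_mod; lia.
have le_q2 : q <= 2 by rewrite -(@leq_pmul2r L); lia.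
by case: q def_j le_q2 => [|[|[|q]]] def_j le_q2 //; lia.
Qed.

Definition refl_nfixed L b := count (fun i => refl_index L b i == i) (iota 0 L).

Lemma count_iota_mem (P : pred nat) L (js : seq nat) :
  uniq js -> (forall j, j \in js -> j < L) -> (forall i, i < L -> P i = (i \in js)) ->
  count P (iota 0 L) = size js.
Proof.
move=> js_uniq js_sub Pjs; rewrite (@eq_in_count _ _ (mem js)); last first.
  by move=> i; rewrite mem_iota => /andP[_ lt_iL]; apply: Pjs.
elim: js js_uniq js_sub {Pjs} => [|j js IHjs] /=; first by rewrite count_pred0.
move=> /andP[j_js js_uniq] js_sub.
have lt_jL : j < L by apply: js_sub; rewrite mem_head.
rewrite -IHjs // => [|i i_js]; last by apply: js_sub; rewrite inE i_js orbT.
have := count_predUI (pred1 j) (mem js) (iota 0 L).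
rewrite (@eq_count _ (predI _ _) pred0) => [|i /=]; last first.
  by apply/negbTE; apply: contra j_js => /andP[/eqP <-].
have -> : count (pred1 j) (iota 0 L) = 1.
  by rewrite count_uniq_mem ?iota_uniq // mem_iota lt_jL.
rewrite count_pred0 addn0 add1n => <-.
by apply: eq_count => i; rewrite !inE.
Qed.

Lemma refl_nfixed_odd L b : b <= 2 -> 3 <= L -> odd L -> refl_nfixed L b = 1.
Proof.
move=> le_b2 le_3L odd_L; have [k def_L] : exists k, L = k.*2.+1.
  by exists L./2; rewrite -{1}(odd_double_half L) odd_L.
(* the unique fixed point is b / 2 or, for b = 1, (L + 1) / 2 *)
apply: (@count_iota_mem _ _ [:: nth 0 [:: 0; k.+1; 1] b]) => // [i|i lt_iL].
  by rewrite inE => /eqP ->; case: b le_b2 => [|[|[|]]] //=; lia.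
by rewrite refl_index_fixed ?inE; [case: b le_b2 => [|[|[|]]] //= | ..]; lia.
Qed.

Lemma refl_nfixed_even L : 2 <= L -> ~~ odd L ->
  [/\ refl_nfixed L 0 = 2, refl_nfixed L 1 = 0 & refl_nfixed L 2 = 2].
Proof.
move=> le_2L even_L; have [k def_L] : exists k, L = k.*2.
  by exists L./2; rewrite -{1}(odd_double_half L) (negbTE even_L).
have fixedE b i : b <= 2 -> i < L ->
    (refl_index L b i == i) = [|| b + L == i.*2, b == i.*2 | b == i.*2 + L].
  by move=> le_b2 lt_iL; rewrite refl_index_fixed.
split.
- apply: (@count_iota_mem _ _ [:: 0; k]) => [|i|i lt_iL]; rewrite /= ?fixedE ?inE //=; lia.
- apply: (@count_iota_mem _ _ [::]) => // i lt_iL.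
  by rewrite fixedE // in_nil; apply/negbTE; lia.
- have [le_k1|lt_1k] := leqP k 1.
    apply: (@count_iota_mem _ _ [:: 0; 1]) => [|i|i lt_iL]; rewrite /= ?fixedE ?inE //=; lia.
  apply: (@count_iota_mem _ _ [:: 1; k.+1]) => [|i|i lt_iL]; rewrite /= ?fixedE ?inE //=; lia.
Qed.

(* Reflections of the cycle of a permutation g through a point x: numbering
   the cycle x, g x, ..., g^(L-1) x by Z/LZ, the reflection i |-> b - i. *)
Section CycleReflection.
Variables (T : finType) (g : {perm T}) (x : T).
Local Open Scope group_scope.

Let O := porbit g x.
Let L := #|O|.

Definition cycle_index z := index z (traject g x L).

Definition cycle_reflection b z := iter (refl_index L b (cycle_index z)) g x.

Let L_gt0 : 0 < L.
Proof. by rewrite lt0n card_porbit_neq0. Qed.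

Let iter_in j : iter j g x \in O.
Proof. by rewrite -permX mem_porbit. Qed.

Let iter_mod j : iter j g x = iter (j %% L) g x.
Proof.
rewrite {1}(divn_eq j L) addnC iterD; congr (iter _ g _).
by elim: (j %/ L) => [|q IHq]; rewrite ?mul0n // mulSn iterD IHq iter_porbit.
Qed.

Let cycle_indexP z : z \in O -> cycle_index z < L /\ iter (cycle_index z) g x = z.
Proof.
rewrite porbit_traject => z_cycle.
have lt_zL : cycle_index z < L by rewrite -[X in _ < X](size_traject g x L) index_mem.
by split => //; rewrite -(nth_traject g lt_zL x) nth_index.
Qed.

Let cycle_index_iter i : i < L -> cycle_index (iter i g x) = i.
Proof.
move=> lt_iL; rewrite /cycle_index -(nth_traject g lt_iL x).
by rewrite index_uniq ?size_traject ?uniq_traject_porbit.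
Qed.

Let iter_eq i j : i < L -> j < L -> (iter i g x == iter j g x) = (i == j).
Proof.
move=> lt_iL lt_jL; rewrite -(nth_traject g lt_iL x) -(nth_traject g lt_jL x).
by rewrite nth_uniq ?size_traject ?uniq_traject_porbit.
Qed.

Lemma cycle_reflection_in b z : cycle_reflection b z \in O.
Proof. exact: iter_in. Qed.

Lemma cycle_reflectionK b : {in O, involutive (cycle_reflection b)}.
Proof.
move=> z /cycle_indexP [lt_zL def_z].
by rewrite /cycle_reflection cycle_index_iter ?ltn_mod // refl_indexK.
Qed.

Lemma cycle_reflectionS b :
  {in O, forall z, cycle_reflection b.+1 (cycle_reflection b z) = g z}.
Proof.
move=> z /cycle_indexP [lt_zL def_z].
rewrite /cycle_reflection cycle_index_iter ?ltn_mod // refl_indexS //.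
by rewrite -iter_mod iterS def_z.
Qed.

Lemma cycle_reflection_nmoved b :
  #|[set z in O | cycle_reflection b z != z]| + refl_nfixed L b = L.
Proof.
have -> : [set z in O | cycle_reflection b z != z] =
          [set z in filter (fun z => cycle_reflection b z != z) (traject g x L)].
  by apply/setP => z; rewrite !inE mem_filter -porbit_traject andbC.
rewrite cardsE (card_uniqP _) ?filter_uniq ?uniq_traject_porbit // size_filter.
have -> : traject g x L = map (fun i => iter i g x) (iota 0 L).
  by elim: (L) => // n IHn; rewrite trajectSr IHn -addn1 iotaD map_cat cats1.
rewrite count_map (@eq_in_count _ _ (predC (fun i => refl_index L b i == i))).
  by rewrite addnC /refl_nfixed count_predC size_iota.
move=> i; rewrite mem_iota add0n => /andP[_ lt_iL] /=.
by rewrite /cycle_reflection cycle_index_iter // iter_eq // ltn_mod.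
Qed.

Lemma extend_by_reflection b (s' : {perm T}) :
  involutive s' -> {in O, forall z, s' z = z} ->
  exists s : {perm T}, [/\ involutive s, {in O, s =1 cycle_reflection b},
    (forall z, z \notin O -> s z = s' z) & nmoved s + refl_nfixed L b = nmoved s' + L].
Proof.
move=> s'K s'O.
have s'N z : z \notin O -> s' z \notin O.
  by apply: contra => sz_cycle; rewrite -[z]s'K s'O.
pose sf z := if z \in O then cycle_reflection b z else s' z.
have sfK : involutive sf.
  move=> z; rewrite /sf; case: (boolP (z \in O)) => z_cycle.
    by rewrite cycle_reflection_in cycle_reflectionK.
  by rewrite (negbTE (s'N z z_cycle)) s'K.
pose s := perm (can_inj sfK); have sE z : s z = sf z by rewrite permE.
exists s; split.
- by move=> z; rewrite !sE.
- by move=> z z_cycle; rewrite sE /sf z_cycle.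
- by move=> z z_cycle; rewrite sE /sf (negbTE z_cycle).
rewrite /nmoved -(cardsID O [set z | s z != z]).
have -> : [set z | s z != z] :\: O = [set z | s' z != z].
  apply/setP => z; rewrite !inE sE /sf.
  by case: (boolP (z \in O)) => z_cycle //=; rewrite s'O ?eqxx.
have -> : [set z | s z != z] :&: O = [set z in O | cycle_reflection b z != z].
  by apply/setP => z; rewrite !inE sE /sf andbC; case: (z \in O).
by have := cycle_reflection_nmoved b; lia.
Qed.

Lemma collapse_cycle : g x != x -> exists g' : {perm T},
  [/\ {in O, forall z, g' z = z}, (forall z, z \notin O -> g' z = g z)
    & nmoved g' < nmoved g].
Proof.
move=> gx.
have gO z : (g z \in O) = (z \in O).
  by rewrite /O -!eq_porbit_mem -[in RHS](porbit_perm g 1 z) expg1.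
pose gf z := if z \in O then z else g z.
have gf_inj : injective gf.
  move=> z1 z2; rewrite /gf; case: ifP => z1_cycle; case: ifP => z2_cycle // eq_g.
  - by move: z2_cycle; rewrite -gO -eq_g z1_cycle.
  - by move: z1_cycle; rewrite -gO eq_g z2_cycle.
  - exact: perm_inj eq_g.
pose g' := perm gf_inj; have g'E z : g' z = gf z by rewrite permE.
exists g'; split => [z z_cycle|z z_cycle|]; rewrite ?g'E /gf ?(negbTE z_cycle) ?z_cycle //.
rewrite /nmoved proper_card //; apply/properP; split.
  by apply/subsetP => z; rewrite !inE g'E /gf; case: ifP; rewrite ?eqxx.
by exists x; rewrite !inE ?gx // g'E /gf porbit_id eqxx.
Qed.

End CycleReflection.

Section Factorization.
Variable T : finType.
Implicit Types g s u : {perm T}.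
Local Open Scope group_scope.

Lemma fixed_notin_cycle g x z : g x != x -> g z = z -> z \notin porbit g x.
Proof.
move=> gx gz; apply: contra gx; rewrite porbit_sym => /porbitP [i ->].
by rewrite permX_fix // gz.
Qed.

Lemma card_moved_cycle g x : g x != x -> 1 < #|porbit g x|.
Proof.
move=> gx; have <- : #|[set x; g x]| = 2 by rewrite cards2 eq_sym gx.
apply: subset_leq_card; apply/subsetP => z; rewrite !inE => /orP[] /eqP ->.
  exact: porbit_id.
by rewrite -(porbit_perm g 1 x) expg1 porbit_id.
Qed.

(* Every permutation g is a product of two involutions s and u (g = s * u,
   i.e. g z = u (s z)) fixing all fixed points of g: on each cycle, s and u
   are two reflections in consecutive axes.  For each cycle we give the
   reflection with more fixed points to the factor currently moving more
   points, which keeps the numbers of moved points within 2 of each other. *)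
Lemma involution_factorization g : exists s u,
  [/\ involutive s, involutive u, g = s * u,
      (forall z, g z = z -> s z = z /\ u z = z) &
      nmoved s <= nmoved u + 2 /\ nmoved u <= nmoved s + 2].
Proof.
have [k] := ubnP (nmoved g); elim: k g => // k IHk g lt_gk.
have [g0|/moved_pointP [x gx]] := eqVneq (nmoved g) 0.
  exists 1, 1; rewrite (nmoved0 g0) mulg1.
  by split=> // [z|z|]; rewrite ?perm1 ?leq_addr.
set O := porbit g x; set L := #|O|; have le_2L : 1 < L by apply: card_moved_cycle.
have [g' [g'O g'N lt_g'g]] := collapse_cycle gx.
have [s' [u' [s'K u'K def_g' g'fix [bal1 bal2]]]] : exists s' u',
    [/\ involutive s', involutive u', g' = s' * u',
        (forall z, g' z = z -> s' z = z /\ u' z = z) &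
        nmoved s' <= nmoved u' + 2 /\ nmoved u' <= nmoved s' + 2].
  by apply: IHk; lia.
have s'O : {in O, forall z, s' z = z} by move=> z /g'O /g'fix [].
have u'O : {in O, forall z, u' z = z} by move=> z /g'O /g'fix [].
pose a := if nmoved u' <= nmoved s' then 0%N else 1%N.
have [s [sK sO sN nmoved_s]] := extend_by_reflection a s'K s'O.
have [u [uK uO uN nmoved_u]] := extend_by_reflection a.+1 u'K u'O.
exists s, u; split => //.
- apply/permP => z; rewrite permM; have [z_cycle|z_cycle] := boolP (z \in O).
    by rewrite sO // uO ?cycle_reflection_in // cycle_reflectionS.
  have sz_cycle : s z \notin O.
    by apply: contra z_cycle => sz_cycle; rewrite -[z]sK sO // cycle_reflection_in.
  by rewrite -g'N // def_g' permM uN // sN.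
- move=> z gz; have z_cycle := fixed_notin_cycle gx gz.
  by rewrite sN // uN //; apply: g'fix; rewrite g'N.
have [odd_L|even_L] := boolP (odd L).
  have le_3L : 2 < L by move: le_2L odd_L; case: (L) => [|[|[|]]].
  have le_a1 : a <= 1 by rewrite /a; case: ifP.
  by move: nmoved_s nmoved_u; rewrite !refl_nfixed_odd //; lia.
have [fix0 fix1 fix2] := refl_nfixed_even le_2L even_L.
by move: nmoved_s nmoved_u; rewrite /a; case: ifP; rewrite ?fix0 ?fix1 ?fix2; lia.
Qed.

End Factorization.

Section EvenCommutator.
Variable T : finType.
Implicit Types g s u p : {perm T}.
Local Open Scope group_scope.

(* For an even g, the factors of involution_factorization move the same number
   of points: their signs agree, and the sign of an involution moving 2k
   points is (-1)^k. *)
Lemma balanced_factorization g : ~~ odd_perm g -> exists s u,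
  [/\ involutive s, involutive u, g = s * u,
      (forall z, g z = z -> s z = z /\ u z = z) & nmoved s = nmoved u].
Proof.
move=> even_g; have [s [u [sK uK def_g gfix [bal1 bal2]]]] := involution_factorization g.
exists s, u; split => //.
have [even_ns odd_s] := odd_perm_involution sK.
have [even_nu odd_u] := odd_perm_involution uK.
have same_sign : odd (nmoved s)./2 = odd (nmoved u)./2.
  move: even_g; rewrite def_g odd_permM -odd_s -odd_u.
  by case: (odd_perm s); case: (odd_perm u).
rewrite -(odd_double_half (nmoved s)) -(odd_double_half (nmoved u)).
rewrite (negbTE even_ns) (negbTE even_nu) in bal1 bal2 *.
move: bal1 bal2 same_sign; set hs := _./2; set hu := _./2 => bal1 bal2.
have [lt_su|lt_us|->] := ltngtP hs hu => // same_sign.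
  have def_hu : hu = hs.+1 by lia.
  by rewrite def_hu /= in same_sign; case: (odd hs) same_sign.
have def_hs : hs = hu.+1 by lia.
by rewrite def_hs /= in same_sign; case: (odd hu) same_sign.
Qed.

(* Using two fixed points a, b of g, the first factor can be made even:
   multiply both factors by the transposition (a b), which commutes with them. *)
Lemma even_balanced_factorization g a b : ~~ odd_perm g -> a != b ->
  g a = a -> g b = b -> exists s u,
  [/\ involutive s, involutive u, g = s * u,
      (forall z, g z = z -> z != a -> z != b -> s z = z /\ u z = z) &
      nmoved s = nmoved u /\ ~~ odd_perm s].
Proof.
move=> even_g ab ga gb.
have [s [u [sK uK def_g gfix nmoved_su]]] := balanced_factorization even_g.
have [even_s|odd_s] := boolP (~~ odd_perm s).
  by exists s, u; split=> // z gz _ _; apply: gfix.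
have [sa ua] := gfix a ga; have [sb ub] := gfix b gb.
set t := tperm a b.
have [tsK nmoved_ts] := involution_tperm sK ab sa sb.
have [tuK nmoved_tu] := involution_tperm uK ab ua ub.
have commute_t (w : {perm T}) : w a = a -> w b = b -> t * w = w * t.
  by move=> wa wb; apply/permP => z; rewrite !permM tperm_commute.
exists (t * s), (t * u); split => //.
- by rewrite (commute_t s) // -mulgA (mulgA t) tperm2 mul1g.
- by move=> z gz za zb; rewrite !permM tpermD 1?eq_sym //; apply: gfix.
- by rewrite nmoved_ts nmoved_tu nmoved_su odd_mul_tperm ab.
Qed.

(* Write g = s * u as above
   with s even; s and u are conjugate, u = s ^ p, and the transposition (c d)
   can be used to make p even.  Then g = s * s ^ p = [~ s, p] as s = s^-1. *)
Lemma even_perm_commutator g a b c d : ~~ odd_perm g ->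
  uniq [:: a; b; c; d] -> (forall z, z \in [:: a; b; c; d] -> g z = z) ->
  exists s p, [/\ ~~ odd_perm s, ~~ odd_perm p & g = [~ s, p]].
Proof.
move=> even_g abcd gfix4.
move: abcd; rewrite /= !inE !negb_or => /and4P[/and3P[ab ac ad] /andP[bc bd] cd _].
have [ga gb gc gd] : [/\ g a = a, g b = b, g c = c & g d = d].
  by split; apply: gfix4; rewrite !inE eqxx ?orbT.
have [s [u [sK uK def_g gfix [nmoved_su even_s]]]] :=
  even_balanced_factorization even_g ab ga gb.
have [sc uc] : s c = c /\ u c = c by apply: gfix; rewrite // eq_sym.
have [sd ud] : s d = d /\ u d = d by apply: gfix; rewrite // eq_sym.
have [p [pE even_p]] : exists p, (forall z, u (p z) = p (s z)) /\ ~~ odd_perm p.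
  have [p0 p0E] := involution_conj sK uK nmoved_su.
  have [odd_p0|even_p0] := boolP (odd_perm p0); last by exists p0.
  exists (p0 * tperm c d); split.
    by move=> z; rewrite !permM tperm_commute ?p0E.
  by rewrite odd_permM odd_tperm cd odd_p0.
exists s, p; split => //.
have sV : s^-1 = s.
  by apply/eqP; rewrite eq_invg_mul; apply/eqP/permP => z; rewrite permM sK perm1.
have def_u : u = s ^ p.
  by apply/permP => z; rewrite conjgE !permM -pE permKV.
by rewrite def_g def_u commgEl sV.
Qed.

End EvenCommutator.

Lemma Ainf_commutator g : Ainf g -> is_commutator g.
Proof.
move=> [n [s [even_s g_s]]].
have [t [sign_t t_s]] : exists t : 'S_(n.+4),
    odd_perm t = odd_perm s /\ finperm_of t =1 finperm_of s.
  by apply: widen_perm; lia.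
(* the points n, n+1, n+2, n+3 are fixed by t *)
pose e j : 'I_(n.+4) := inord (n + j).
have eE j : j < 4 -> nat_of_ord (e j) = n + j by move=> lt_j4; rewrite inordK; lia.
have [x [y [even_x even_y def_t]]] : exists x y : 'S_(n.+4),
    [/\ ~~ odd_perm x, ~~ odd_perm y & t = [~ x, y]%g].
  apply: (@even_perm_commutator _ _ (e 0) (e 1) (e 2) (e 3)); first by rewrite sign_t.
    by rewrite /= !inE -!(inj_eq (@ord_inj _)) !eE //; lia.
  move=> z; rewrite !inE => /or4P[] /eqP ->; apply: ord_inj;
    by rewrite -finperm_of_ord t_s finperm_of_ge ?eE //; lia.
exists (finperm_of y), (finperm_of x), (finperm_of y^-1), (finperm_of x^-1).
split; try exact: finperm_of_inv; [by exists n.+4, y | by exists n.+4, x |].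
move=> i; rewrite g_s -t_s def_t commgEl conjgE !mulgA.
by do 3!rewrite finperm_ofM /=.
Qed.

Lemma conjugate_moved_points n (s : 'S_n) g c :
  g =1 finperm_of s -> conjugate_in_Ainf g c ->
  exists z : nat -> nat, forall i, c i != i -> i \in map z (iota 0 n).
Proof.
move=> g_s [z [zi [_ [_ ziK] def_c]]]; exists z => i; apply: contraR => i_out.
rewrite def_c /= g_s finperm_of_ge ?ziK // leqNgt; apply: contra i_out => lt_zin.
by apply/mapP; exists (zi i); rewrite ?mem_iota ?ziK.
Qed.

Definition rotation m : 'S_m := perm (@ordS_inj m).

Lemma rotation2_moves m i : 2 < m -> i < m ->
  finperm_of (rotation m * rotation m)%g i != i.
Proof.
move=> lt_2m lt_im; rewrite (finperm_of_lt _ lt_im) permM !permE /=.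
rewrite -addn1 modnDml addn1.
have [lt_i2m|le_mi2] := ltnP i.+2 m; first by rewrite modn_small //; lia.
have -> : i.+2 = i.+2 - m + m by lia.
by rewrite modnDr modn_small; lia.
Qed.

(* For every conjugacy class C of A_oo, C^2 <> A_oo: if g moves at most n
   points, a product of two conjugates of g moves at most 2n points, whereas
   the square of a (2n+3)-cycle, an even permutation, moves 2n+3 points. *)
Lemma Ainf_class_square g : Ainf g -> exists w, Ainf w /\
  ~ (exists c1 c2, conjugate_in_Ainf g c1 /\ conjugate_in_Ainf g c2 /\ w =1 c1 \o c2).
Proof.
move=> [n [s [_ g_s]]]; set m := n.*2.+3.
exists (finperm_of (rotation m * rotation m)%g); split.
  by exists m, (rotation m * rotation m)%g; rewrite odd_permM addbb.
move=> [c1 [c2 [conj_c1 [conj_c2 def_w]]]].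
have [z1 c1_moved] := conjugate_moved_points g_s conj_c1.
have [z2 c2_moved] := conjugate_moved_points g_s conj_c2.
have moved_sub : {subset iota 0 m <= map z1 (iota 0 n) ++ map z2 (iota 0 n)}.
  move=> i; rewrite mem_iota add0n => /(@rotation2_moves m i isT).
  rewrite def_w /= mem_cat; have [c2i|/c2_moved -> _] := eqVneq (c2 i) i.
    by rewrite c2i => /c1_moved ->.
  by rewrite orbT.
have := uniq_leq_size (iota_uniq 0 m) moved_sub.
by rewrite size_cat !size_map !size_iota /m; lia.
Qed.

Theorem mainTheorem4 :
  (forall g, Ainf g -> is_commutator g) /\
  (forall g, Ainf g ->
     exists w, Ainf w /\
       ~ (exists c1 c2, conjugate_in_Ainf g c1 /\ conjugate_in_Ainf g c2 /\
                        w =1 c1 \o c2)).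
Proof. split; [exact: Ainf_commutator | exact: Ainf_class_square]. Qed.
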